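(* In the multi-access coded caching scheme obtained from a cross resolvable design with a chosen $z\in\{2,\dots,r\}$ for which $\mu_z$ exists (described in the context), the number of users benefited in each transmission (the coding gain) is $g=2^z$.
   Context: A resolvable design $(X,\mathcal{A})$: $X$ a finite set of $v$ points, $\mathcal{A}$ a collection of $b$ blocks each of size $k$, partitioned into $r$ parallel classes, each being a set of $b_r=v/k$ pairwise disjoint blocks with union $X$. $\mu_z$ exists if $|B_1\cap\cdots\cap B_z|$ equals the same nonzero value $\mu_z$ for every choice of blocks from $z$ distinct parallel classes. Users: one user $U_H$ for each set $H$ of $z$ blocks from $z$ distinct parallel classes, connected to the caches of those blocks (one cache per block). Placement: each file $W_i$ is split into subfiles $W_{i,x}$, $x\in X$; the cache of block $A_j$ stores $W_{i,x}$ for $x\in A_j$ and all $i$. Delivery (distinct demands $d_m$): for each choice of $z$ parallel classes $\mathcal{P}_1,\dots,\mathcal{P}_z$ and each choice of a pair of distinct blocks $\{C_{s,i_s},C_{s,j_s}\}\subseteq\mathcal{P}_s$ for every $s\in[z]$, let $\mathcal{X}$ be the $2^z$ users whose caches consist of one block from each chosen pair; for $m\in\mathcal{X}$ connected to $C_{1,a_1},\dots,C_{z,a_z}$, with $e_s$ the other index of $\{i_s,j_s\}$, put $f_m=C_{1,e_1}\cap\cdots\cap C_{z,e_z}=\{y_{m,1},\dots,y_{m,\mu_z}\}$, and transmit $\bigoplus_{m\in\mathcal{X}}W_{d_m,y_{m,s}}$ for each $s\in[\mu_z]$. A user is benefited by a transmission if it obtains a subfile of its demanded file from it. *)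

From mathcomp Require Import all_boot.
Set Implicit Arguments. Unset Strict Implicit. Unset Printing Implicit Defensive.

(* A resolvable design on the finite point set X: r parallel classes, each
   consisting of br (= v/k) blocks indexed by 'I_br; block (i, j) is B i j. *)
Definition resolvable (X : finType) (r br k : nat) (B : 'I_r -> 'I_br -> {set X}) :=
  [/\ (forall i j, #|B i j| = k),
      (forall i j j', j != j' -> [disjoint B i j & B i j']) &
      (forall i, \bigcup_(j < br) B i j = [set: X])].

Definition mu_exists (X : finType) (r br : nat) (B : 'I_r -> 'I_br -> {set X})
    (z mu : nat) :=
  0 < mu /\
  forall (S : {set 'I_r}) (a : 'I_r -> 'I_br),
    #|S| = z -> #|\bigcap_(s in S) B s (a s)| = mu.

(* A user U_H is identified with H: a set of z blocks (given by their indices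
   (class, block)) from z distinct parallel classes. *)
Definition is_user (r br z : nat) (H : {set 'I_r * 'I_br}) : bool :=
  (#|H| == z) && [forall p in H, forall q in H, (p.1 == q.1) ==> (p == q)].

(* The points whose subfiles are available to user H (union of its caches). *)
Definition cache (X : finType) (r br : nat) (B : 'I_r -> 'I_br -> {set X})
    (H : {set 'I_r * 'I_br}) : {set X} :=
  \bigcup_(p in H) B p.1 p.2.

(* The 2^z users involved in the transmissions for classes S and pairs
   {pi s, pj s} of blocks of class s: one block from each chosen pair. *)
Definition tx_users (r br : nat) (S : {set 'I_r}) (pi pj : 'I_r -> 'I_br)
    : {set {set 'I_r * 'I_br}} :=
  [set [set (s, a s) | s in S] | a : {ffun 'I_r -> 'I_br} &
     [forall s in S, (a s == pi s) || (a s == pj s)]].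

(* e_s : the index of the pair {pi s, pj s} not used by user H in class s. *)
Definition other (r br : nat) (pi pj : 'I_r -> 'I_br) (H : {set 'I_r * 'I_br})
    (s : 'I_r) : 'I_br :=
  if (s, pi s) \in H then pj s else pi s.

Definition fset_m (X : finType) (r br : nat) (B : 'I_r -> 'I_br -> {set X})
    (S : {set 'I_r}) (pi pj : 'I_r -> 'I_br) (H : {set 'I_r * 'I_br}) : {set X} :=
  \bigcap_(s in S) B s (other pi pj H s).

(* A transmission is XOR_{m in Xu} W_{d m, pt m}.  User U is benefited if it
   obtains from it a subfile of its demanded file that it does not have:
   some summand is a subfile of its demanded file not in its cache, and all
   the other summands are subfiles it has cached. *)
Definition benefited (X : finType) (r br : nat) (B : 'I_r -> 'I_br -> {set X})
    (d : {set 'I_r * 'I_br} -> nat) (Xu : {set {set 'I_r * 'I_br}})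
    (pt : {set 'I_r * 'I_br} -> X) (U : {set 'I_r * 'I_br}) : bool :=
  [exists m in Xu,
     [&& d m == d U, pt m \notin cache B U &
         [forall m' in Xu, (m' != m) ==> (pt m' \in cache B U)]]].

(* The 2^z users of a transmission are indexed by the subsets T of the chosen
   classes S: in class s the user indexed by T caches block pi s if s is in T
   and pj s otherwise, so the blocks e_s defining its f_m are those of the
   user indexed by the complement of T.  Hence f_m misses the cache of m
   (distinct blocks of a class are disjoint), while for any other user m' of
   the transmission some class s has e_s(m') equal to the block of m, so the
   summand of m' lies in the cache of m: every user of the transmission is
   benefited.  Conversely a benefited user demands the file of some user of
   the transmission, and demands are distinct, so no other user benefits. *)
From mathcomp Require Import all_boot.
Set Implicit Arguments. Unset Strict Implicit. Unset Printing Implicit Defensive.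

Section PairUsers.

Variables (r br : nat) (S : {set 'I_r}) (pi pj : 'I_r -> 'I_br).
Hypothesis pi_neq_pj : forall s, s \in S -> pi s != pj s.

Definition pick_block (T : {set 'I_r}) (s : 'I_r) : 'I_br :=
  if s \in T then pi s else pj s.

Definition pair_user (T : {set 'I_r}) : {set 'I_r * 'I_br} :=
  [set (s, pick_block T s) | s in S].

Lemma mem_pair_user T s b :
  ((s, b) \in pair_user T) = (s \in S) && (b == pick_block T s).
Proof.
apply/imsetP/andP => [[s' s'S [-> ->]] // | [sS /eqP ->]].
by exists s.
Qed.

Lemma is_user_pair_user T : is_user #|S| (pair_user T).
Proof.
rewrite /is_user card_imset ?eqxx /=; last by move=> s s' [].
apply/forall_inP => _ /imsetP [s _ ->]; apply/forall_inP => _ /imsetP [s' _ ->].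
by apply/implyP => /eqP /= ->.
Qed.

Lemma pick_blockC_neq T s : s \in S -> pick_block (~: T) s != pick_block T s.
Proof.
move=> sS; rewrite /pick_block inE.
by case: (s \in T); [rewrite eq_sym|]; apply: pi_neq_pj.
Qed.

Lemma other_pair_user T s :
  s \in S -> other pi pj (pair_user T) s = pick_block (~: T) s.
Proof.
move=> sS; rewrite /other mem_pair_user sS /= /pick_block inE.
by case: (s \in T); rewrite /= ?eqxx // (negbTE (pi_neq_pj sS)).
Qed.

Lemma pick_blockC_eq (T T' : {set 'I_r}) s :
  (s \in T) != (s \in T') -> pick_block (~: T') s = pick_block T s.
Proof. by rewrite /pick_block inE; case: (s \in T); case: (s \in T'). Qed.

Lemma separating_class (T T' : {set 'I_r}) :
  T \subset S -> T' \subset S -> T != T' ->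
  exists2 s, s \in S & (s \in T) != (s \in T').
Proof.
move=> TS T'S neqTT'; apply/exists_inP; apply: contraR neqTT' => /exists_inPn noS.
apply/eqP/setP => s; case sS: (s \in S).
  by apply/eqP; rewrite -[_ == _]negbK noS.
by rewrite (contraFF (subsetP TS s) sS) (contraFF (subsetP T'S s) sS).
Qed.

Lemma pair_user_inj : {in powerset S &, injective pair_user}.
Proof.
move=> T T'; rewrite !inE => TS T'S eqTT'; case: (eqVneq T T') => // neqTT'.
have [s sS sTT'] := separating_class TS T'S neqTT'.
have : (s, pick_block T s) \in pair_user T' by rewrite -eqTT' mem_pair_user sS eqxx.
rewrite mem_pair_user sS -(pick_blockC_eq sTT').
by rewrite (negbTE (pick_blockC_neq T' sS)).
Qed.

Lemma tx_usersE : tx_users S pi pj = pair_user @: powerset S.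
Proof.
apply/setP => H; apply/imsetP/imsetP => [[a] | [T _ ->]].
  rewrite inE => /forall_inP a_pair ->.
  exists [set s in S | a s == pi s].
    by rewrite inE; apply/subsetP => s; rewrite inE => /andP [].
  apply: eq_in_imset => s sS; rewrite /pick_block inE sS /=.
  by case/orP: (a_pair s sS) => /eqP ->; rewrite ?eqxx //; case: eqP => [->|].
exists [ffun s => pick_block T s]; last by apply: eq_imset => s; rewrite ffunE.
rewrite inE; apply/forall_inP => s _; rewrite ffunE /pick_block.
by case: (s \in T); rewrite eqxx ?orbT.
Qed.

Lemma is_user_tx_users : {in tx_users S pi pj, forall m, is_user #|S| m}.
Proof. by move=> m; rewrite tx_usersE => /imsetP [T _ ->]; apply: is_user_pair_user. Qed.

Lemma card_tx_users : #|tx_users S pi pj| = 2 ^ #|S|.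
Proof. by rewrite tx_usersE card_in_imset ?card_powerset //; apply: pair_user_inj. Qed.

Variables (X : finType) (B : 'I_r -> 'I_br -> {set X}).
Hypothesis disjoint_class : forall s b b', b != b' -> [disjoint B s b & B s b'].

Lemma disjoint_fset_m_cache T :
  [disjoint fset_m B S pi pj (pair_user T) & cache B (pair_user T)].
Proof.
apply/pred0P => x /=; apply/negbTE/andP => [[/bigcapP xf /bigcupP [[s b]]]].
rewrite mem_pair_user => /andP [sS /eqP ->] /=; apply/negP.
have := xf s sS; rewrite other_pair_user // => xBC.
by rewrite (disjointFr (disjoint_class s (pick_blockC_neq T sS)) xBC).
Qed.

Lemma fset_m_sub_cache (T T' : {set 'I_r}) :
  T \subset S -> T' \subset S -> T != T' ->
  fset_m B S pi pj (pair_user T') \subset cache B (pair_user T).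
Proof.
move=> TS T'S neqTT'; have [s sS sTT'] := separating_class TS T'S neqTT'.
apply/subsetP => x /bigcapP /(_ s sS); rewrite other_pair_user // => xB.
apply/bigcupP; exists (s, pick_block T s); first by rewrite mem_pair_user sS eqxx.
by rewrite -(pick_blockC_eq sTT').
Qed.

Variables (d : {set 'I_r * 'I_br} -> nat) (pt : {set 'I_r * 'I_br} -> X).
Hypothesis pt_fset_m :
  forall m, m \in tx_users S pi pj -> pt m \in fset_m B S pi pj m.

Lemma benefited_tx_users U :
  U \in tx_users S pi pj -> benefited B d (tx_users S pi pj) pt U.
Proof.
have pt_pair (T : {set 'I_r}) :
    T \subset S -> pt (pair_user T) \in fset_m B S pi pj (pair_user T).
  by move=> TS; apply: pt_fset_m; rewrite tx_usersE imset_f ?inE.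
rewrite {1}tx_usersE => /imsetP [T]; rewrite inE => TS ->.
apply/exists_inP; exists (pair_user T); first by rewrite tx_usersE imset_f ?inE.
rewrite eqxx (disjointFr (disjoint_fset_m_cache T) (pt_pair T TS)) /=.
apply/forall_inP => m'; rewrite tx_usersE => /imsetP [T']; rewrite inE => T'S ->.
apply/implyP => neq; have neqTT' : T != T' by apply: contraNneq neq => ->.
exact: subsetP (fset_m_sub_cache TS T'S neqTT') _ (pt_pair T' T'S).
Qed.

End PairUsers.

Lemma benefited_demand_unique (X : finType) (r br z : nat)
    (B : 'I_r -> 'I_br -> {set X}) (d : {set 'I_r * 'I_br} -> nat)
    (Xu : {set {set 'I_r * 'I_br}}) (pt : {set 'I_r * 'I_br} -> X) U :
  (forall H H', is_user z H -> is_user z H' -> d H = d H' -> H = H') ->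
  {in Xu, forall m, is_user z m} ->
  is_user z U -> benefited B d Xu pt U -> U \in Xu.
Proof.
move=> d_inj Xu_users userU /exists_inP [m mXu /and3P [/eqP dmU _ _]].
by rewrite -(d_inj _ _ (Xu_users m mXu) userU dmU).
Qed.

Theorem lemma4 (X : finType) (r br k z mu : nat) (B : 'I_r -> 'I_br -> {set X})
    (d : {set 'I_r * 'I_br} -> nat) :
  resolvable k B ->
  2 <= z <= r ->
  mu_exists B z mu ->
  (forall H H', is_user z H -> is_user z H' -> d H = d H' -> H = H') ->
  forall (S : {set 'I_r}) (pi pj : 'I_r -> 'I_br),
    #|S| = z ->
    (forall s, s \in S -> pi s != pj s) ->
  forall y : {set 'I_r * 'I_br} -> 'I_mu -> X,
    (forall m, m \in tx_users S pi pj ->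
       injective (y m) /\ (forall t, y m t \in fset_m B S pi pj m)) ->
  forall t : 'I_mu,
    #|[set U | is_user z U &
         benefited B d (tx_users S pi pj) (fun m => y m t) U]| = 2 ^ z.
Proof.
move=> [_ disjoint_class _] _ _ d_inj S pi pj cardS pi_neq_pj y y_fset_m t.
have users_tx : {in tx_users S pi pj, forall m, is_user z m}.
  by rewrite -cardS; apply: is_user_tx_users.
have pt_fset_m m : m \in tx_users S pi pj -> y m t \in fset_m B S pi pj m.
  by move=> mXu; apply: (y_fset_m m mXu).2.
suff -> : [set U | is_user z U & benefited B d (tx_users S pi pj) (fun m => y m t) U]
          = tx_users S pi pj by rewrite card_tx_users // cardS.
apply/setP => U; rewrite inE.
apply/andP/idP => [[userU benU] | UXu].
  exact: benefited_demand_unique d_inj users_tx userU benU.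
by split; [apply: users_tx | apply: benefited_tx_users].
Qed.
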